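(* Let $f:\mathbb{R}^n\to\mathbb{R}$ be continuous with bounded lower-level sets, and let $\gamma_k>0$, $\delta_k>0$, $\gamma_k\delta_k\le c$ for all $k\ge1$ and some $c>0$. Then for every $k$ the optimal set $X_k^*$ of $\min_{x\in\mathbb{R}^n}F_k(x)$ is a nonempty compact set, and for any $\hat x\in X$, $$X_k^*\subseteq\Big\{x\in\mathbb{R}^n: f(x)\le f(\hat x)+\frac{c}{4\alpha_{\min}}\Big\}\quad\text{for all }k.$$ In particular, the sequence of sets $\{X_k^*\}$ is uniformly bounded.
   Context: Let $a_1,\dots,a_m\in\mathbb{R}^n$ be nonzero vectors and $b_1,\dots,b_m\in\mathbb{R}$; $X_i=\{x:\langle a_i,x\rangle-b_i\le0\}$, $X=\bigcap_{i=1}^mX_i$ (assumed nonempty), $\alpha_{\min}=\min_i\|a_i\|$. For $\delta>0$, nonzero $a$ and scalar $b$: $h_\delta(x;a,b)=\frac{\langle a,x\rangle-b}{\|a\|}$ if $\langle a,x\rangle-b>\delta$, $\frac{(\langle a,x\rangle-b+\delta)^2}{4\delta\|a\|}$ if $-\delta\le\langle a,x\rangle-b\le\delta$, $0$ if $\langle a,x\rangle-b<-\delta$. For each $k$, $F_k(x)=f(x)+\frac{\gamma_k}{m}\sum_{i=1}^m h_{\delta_k}(x;a_i,b_i)$, and $X_k^*$ is the set of minimizers of $F_k$ over $\mathbb{R}^n$. *)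

(* R : realType, vectors of R^n are row vectors 'rV[R]_n
   with the (product) topology of MathComp-Analysis; the Euclidean inner product
   and norm are defined explicitly below. *)
From HB Require Import structures.
From mathcomp Require Import all_boot all_order all_algebra.
From mathcomp Require Import all_classical all_reals all_analysis.
Set Implicit Arguments. Unset Strict Implicit. Unset Printing Implicit Defensive.
Import Order.TTheory GRing.Theory Num.Theory.
Import numFieldNormedType.Exports.
Local Open Scope classical_set_scope.
Local Open Scope ring_scope.

Section Defs.
Variable R : realType.

Definition dotp (n : nat) (u v : 'rV[R]_n) : R := \sum_(j < n) u 0 j * v 0 j.

Definition enorm (n : nat) (u : 'rV[R]_n) : R := Num.sqrt (dotp u u).

Definition feasible_set (n m : nat) (a : 'I_m -> 'rV[R]_n) (b : 'I_m -> R)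
  : set 'rV[R]_n := [set x | forall i, dotp (a i) x - b i <= 0].

(* alpha_min = min_i ||a_i|| (the infimum of a finite set; meaningful for m > 0) *)
Definition alpha_min (n m : nat) (a : 'I_m -> 'rV[R]_n) : R :=
  inf (range (fun i => enorm (a i))).

Definition h_delta (n : nat) (delta : R) (a : 'rV[R]_n) (b : R) (x : 'rV[R]_n) : R :=
  let t := dotp a x - b in
  if delta < t then t / enorm a
  else if - delta <= t then (t + delta) ^+ 2 / (4 * delta * enorm a)
  else 0.

Definition Fk (n m : nat) (a : 'I_m -> 'rV[R]_n) (b : 'I_m -> R)
  (f : 'rV[R]_n -> R) (gamma delta : nat -> R) (k : nat) (x : 'rV[R]_n) : R :=
  f x + gamma k / m%:R * \sum_(i < m) h_delta (delta k) (a i) (b i) x.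

Definition Xk_star (n m : nat) (a : 'I_m -> 'rV[R]_n) (b : 'I_m -> R)
  (f : 'rV[R]_n -> R) (gamma delta : nat -> R) (k : nat) : set 'rV[R]_n :=
  [set x | forall y, Fk a b f gamma delta k x <= Fk a b f gamma delta k y].

Definition bounded_lower_level_sets (n : nat) (f : 'rV[R]_n -> R) : Prop :=
  forall t : R, exists M : R, forall x, f x <= t -> enorm x <= M.

End Defs.

From HB Require Import structures.
From mathcomp Require Import all_boot all_order all_algebra.
From mathcomp Require Import all_classical all_reals all_analysis.
From mathcomp Require Import ring lra.
Set Implicit Arguments. Unset Strict Implicit. Unset Printing Implicit Defensive.
Import Order.TTheory GRing.Theory Num.Theory.
Import numFieldNormedType.Exports.
Local Open Scope classical_set_scope.
Local Open Scope ring_scope.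

(* The smoothed penalty h_delta is nonnegative, continuous (it is a clamped
   quadratic in the residual <a, x> - b), and on the feasible side of its
   half-space it never exceeds its value delta / (4 |a|) at the boundary.
   Hence f <= F_k everywhere, while F_k <= f + gamma_k delta_k / (4 alpha_min)
   on X.  Comparing a minimizer of F_k with a feasible xhat gives the level
   bound, and F_k inherits continuity and bounded lower-level sets from f,
   which yields nonempty compact minimizer sets. *)

Section Euclidean.
Variables (R : realType) (n : nat).
Implicit Types (u x : 'rV[R]_n).

Lemma dotp_continuous u : continuous (dotp u).
Proof.
apply: continuous_big => [|j _ x]; first exact: add_continuous.
by apply: continuousM; [exact: cst_continuous | exact: coord_continuous].
Qed.

Lemma dotp_self_ge0 x : 0 <= dotp x x.
Proof. by apply: sumr_ge0 => j _; rewrite -expr2 sqr_ge0. Qed.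

Lemma sqr_coord_le_dotp x j : x 0 j ^+ 2 <= dotp x x.
Proof.
rewrite /dotp (bigD1 j) //= -expr2 lerDl.
by apply: sumr_ge0 => i _; rewrite -expr2 sqr_ge0.
Qed.

Lemma abs_coord_le_enorm x j : `|x 0 j| <= enorm x.
Proof. by rewrite /enorm -sqrtr_sqr ler_sqrt ?dotp_self_ge0 ?sqr_coord_le_dotp. Qed.

Lemma mx_norm_le_enorm x : `|x| <= enorm x.
Proof.
rewrite [leLHS]/Num.Def.normr /= mx_normrE.
apply: bigmax_le => [|[i j] _ /=]; first exact: sqrtr_ge0.
by rewrite ord1; exact: abs_coord_le_enorm.
Qed.

Lemma enorm_gt0 x : x != 0 -> 0 < enorm x.
Proof.
move=> x_neq0; have [j xj0] : exists j, x 0 j != 0.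
  apply: contra_notP (negP x_neq0) => xj0; apply/eqP/matrixP => i j.
  by rewrite ord1 mxE; apply/eqP; apply: contra_notT xj0 => ?; exists j.
rewrite /enorm sqrtr_gt0 (lt_le_trans _ (sqr_coord_le_dotp x j)) //.
by rewrite exprn_even_gt0.
Qed.

End Euclidean.

Section SmoothedPenalty.
Variable R : realType.

(* h_delta as a function of the residual t = <a, x> - b, written with clamps
   so that continuity is immediate. *)
Definition smooth_hinge (d s t : R) : R :=
  ((Num.min (Num.max t (- d)) d + d) ^+ 2 / (4 * d) + Num.max (t - d) 0) / s.

Lemma smooth_hinge_continuous d s : continuous (smooth_hinge d s).
Proof.
move=> t.
have clamp : {for t, continuous (fun u : R => Num.min (Num.max u (- d)) d + d)}.
  apply: cvgD; last exact: cst_continuous.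
  apply: (@continuous_min _ _ (fun u => Num.max u (- d))); last exact: cst_continuous.
  by apply: (@continuous_max _ _ id); [exact: cvg_id | exact: cst_continuous].
have clamp_sqr :
    {for t, continuous (fun u : R => (Num.min (Num.max u (- d)) d + d) ^+ 2)}.
  exact: (continuous_comp clamp (@exprn_continuous R 2 _)).
have excess : {for t, continuous (fun u : R => Num.max (u - d) 0)}.
  apply: (@continuous_max _ _ (fun u => u - d)); last exact: cst_continuous.
  by apply: cvgB; [exact: cvg_id | exact: cst_continuous].
apply: cvgM; last exact: cst_continuous.
by apply: cvgD; [apply: cvgM; [exact: clamp_sqr | exact: cst_continuous] | exact: excess].
Qed.

Variables (n : nat) (d : R) (a : 'rV[R]_n) (b : R).

Lemma h_deltaE x : 0 < d -> h_delta d a b x = smooth_hinge d (enorm a) (dotp a x - b).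
Proof.
move=> d_gt0; rewrite /h_delta /smooth_hinge; set t := dotp a x - b.
case: ifPn => [dt|]; last rewrite -leNgt => td.
  have -> : Num.max t (- d) = t by apply/max_idPl; lra.
  have -> : Num.min t d = d by apply/min_idPr; lra.
  have -> : Num.max (t - d) 0 = t - d by apply/max_idPl; lra.
  by congr (_ / _); field; lra.
case: ifPn => [dt|]; last rewrite -ltNge => tlt.
  have -> : Num.max t (- d) = t by apply/max_idPl.
  have -> : Num.min t d = t by apply/min_idPl.
  have -> : Num.max (t - d) 0 = 0 by apply/max_idPr; lra.
  by rewrite addr0 invfM mulrA.
have -> : Num.max t (- d) = - d by apply/max_idPr; lra.
have -> : Num.min (- d) d = - d by apply/min_idPl; lra.
have -> : Num.max (t - d) 0 = 0 by apply/max_idPr; lra.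
by rewrite addNr expr0n /= !mul0r addr0 mul0r.
Qed.

Lemma h_delta_continuous : 0 < d -> continuous (h_delta d a b).
Proof.
move=> d_gt0 x.
rewrite (_ : h_delta d a b = smooth_hinge d (enorm a) \o (fun y => dotp a y - b)).
  apply: continuous_comp; last exact: smooth_hinge_continuous.
  by apply: continuousB; [exact: dotp_continuous | exact: cst_continuous].
by apply: funext => y /=; rewrite h_deltaE.
Qed.

Lemma h_delta_ge0 x : 0 < d -> 0 <= h_delta d a b x.
Proof.
move=> d_gt0; have := sqrtr_ge0 (dotp a a); rewrite /h_delta -/(enorm a) => a_ge0.
case: ifPn => [dt|_]; first by apply: divr_ge0 => //; lra.
case: ifPn => // _; apply: divr_ge0; first exact: sqr_ge0.
by rewrite !mulr_ge0 //; lra.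
Qed.

Lemma h_delta_le_feasible (alpha : R) x : 0 < d -> 0 < alpha -> alpha <= enorm a ->
  dotp a x - b <= 0 -> h_delta d a b x <= d / (4 * alpha).
Proof.
move=> d_gt0 alpha_gt0 alpha_le; rewrite /h_delta; set t := dotp a x - b => t_le0.
rewrite ifN -?leNgt; last lra.
case: ifPn => [dt|_]; last by apply: divr_ge0; lra.
have a_gt0 : 0 < enorm a := lt_le_trans alpha_gt0 alpha_le.
apply: (@le_trans _ _ (d / (4 * enorm a))).
  rewrite [leRHS](_ : _ = d ^+ 2 / (4 * d * enorm a)); last by field; lra.
  by rewrite ler_pM2r ?invr_gt0 ?mulr_gt0 //; nra.
by rewrite ler_pM2l // lef_pV2 ?posrE ?mulr_gt0 // ler_pM2l.
Qed.

End SmoothedPenalty.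

Lemma alpha_min_le (R : realType) n m (a : 'I_m -> 'rV[R]_n) i :
  alpha_min a <= enorm (a i).
Proof.
by apply: ge_inf; [exists 0 => _ [j _ <-]; exact: sqrtr_ge0 | exists i].
Qed.

Lemma alpha_min_gt0 (R : realType) n m (a : 'I_m -> 'rV[R]_n) :
  (0 < m)%N -> (forall i, a i != 0) -> 0 < alpha_min a.
Proof.
move=> m_gt0 a_neq0.
have min_gt0 : 0 < \big[Num.min/1]_i enorm (a i).
  by elim/big_ind: _ => // [x y x0 y0|i _]; [rewrite lt_min x0 y0 | exact: enorm_gt0].
apply: (lt_le_trans min_gt0); apply: lb_le_inf => [|_ [i _ <-]]; last exact: bigmin_le.
by exists (enorm (a (Ordinal m_gt0))), (Ordinal m_gt0).
Qed.

Section Minimizers.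
Variable R : realType.

Definition minimizers (T : Type) (F : T -> R) : set T := [set x | forall y, F x <= F y].

Lemma closed_minimizers (T : topologicalType) (F : T -> R) :
  continuous F -> closed (minimizers F).
Proof.
move=> F_cont.
rewrite (_ : minimizers F = \bigcap_(y in setT) (F @^-1` [set r | r <= F y])).
  apply: closed_bigI => y _.
  by apply: preimage_closed => [x _|]; [exact: F_cont | exact: closed_le].
by apply/seteqP; split => [x xmin y _| x xmin y]; [exact: xmin | exact: xmin].
Qed.

Lemma bounded_lower_level_setsW n (f g : 'rV[R]_n -> R) :
  (forall x, f x <= g x) -> bounded_lower_level_sets f -> bounded_lower_level_sets g.
Proof.
move=> f_le_g f_bdd t; have [M HM] := f_bdd t.
by exists M => x gx; apply: HM; exact: le_trans (f_le_g x) gx.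
Qed.

Lemma compact_lower_level_set n (F : 'rV[R]_n -> R) t :
  continuous F -> bounded_lower_level_sets F -> compact [set x | F x <= t].
Proof.
move=> F_cont F_bdd; have [M HM] := F_bdd t.
apply: bounded_closed_compact.
  exists M; split; first exact: num_real.
  move=> M' M_lt x Fx; apply: le_trans (mx_norm_le_enorm x) _.
  exact: le_trans (HM x Fx) (ltW M_lt).
apply: (@preimage_closed _ _ F [set r | r <= t]) => [x _|]; last exact: closed_le.
exact: F_cont.
Qed.

(* A minimizer of F on the compact set {F <= F 0} is a global minimizer. *)
Lemma minimizers_nonempty_compact n (F : 'rV[R]_n -> R) :
  continuous F -> bounded_lower_level_sets F ->
  minimizers F !=set0 /\ compact (minimizers F).
Proof.
move=> F_cont F_bdd; set S := [set x | F x <= F 0].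
have S_compact : compact S by exact: compact_lower_level_set.
have [x0 /set_mem Sx0 x0_min] : exists2 x0, x0 \in S & forall y, y \in S -> F x0 <= F y.
  by apply: EVT_min_rV => //; [exists 0; rewrite /S /= | exact: continuous_subspaceT].
have x0_glob : minimizers F x0.
  move=> y; have [Sy|Sy] := pselect (S y); first by apply: x0_min; rewrite inE.
  by apply: (le_trans Sx0); rewrite ltW // ltNge; apply/negP.
split; first by exists x0.
apply: (subclosed_compact _ S_compact); first exact: closed_minimizers.
by move=> x xmin; exact: xmin.
Qed.

End Minimizers.

Section PenalizedObjective.
Variables (R : realType) (n m : nat) (a : 'I_m -> 'rV[R]_n) (b : 'I_m -> R).
Variables (f : 'rV[R]_n -> R) (gamma delta : nat -> R) (k : nat).

Let penalty x := \sum_(i < m) h_delta (delta k) (a i) (b i) x.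

Lemma Fk_continuous : 0 < delta k -> continuous f -> continuous (Fk a b f gamma delta k).
Proof.
move=> delta_gt0 f_cont x.
have penalty_cont : continuous penalty.
  by apply: (continuous_big add_continuous) => i _; exact: h_delta_continuous.
apply: (@continuousD _ _ _ f (fun y => gamma k / m%:R * penalty y)); first exact: f_cont.
apply: (@continuousM _ _ (fun=> gamma k / m%:R) penalty); last exact: penalty_cont.
exact: cst_continuous.
Qed.

Lemma le_Fk x : 0 <= gamma k -> 0 < delta k -> f x <= Fk a b f gamma delta k x.
Proof.
move=> gamma_ge0 delta_gt0; rewrite /Fk lerDl mulr_ge0 ?divr_ge0 //.
by apply: sumr_ge0 => i _; exact: h_delta_ge0.
Qed.

Lemma Fk_le_feasible x : (0 < m)%N -> (forall i, a i != 0) ->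
  0 <= gamma k -> 0 < delta k -> feasible_set a b x ->
  Fk a b f gamma delta k x <= f x + gamma k * delta k / (4 * alpha_min a).
Proof.
move=> m_gt0 a_neq0 gamma_ge0 delta_gt0 x_feas; rewrite /Fk lerD2l.
have alpha_gt0 := alpha_min_gt0 m_gt0 a_neq0.
have penalty_le : \sum_(i < m) h_delta (delta k) (a i) (b i) x <=
                  (delta k / (4 * alpha_min a)) *+ m.
  rewrite -[m in _ *+ m]card_ord -sumr_const; apply: ler_sum => i _.
  exact: h_delta_le_feasible (alpha_min_le a i) (x_feas i).
apply: le_trans (ler_wpM2l _ penalty_le) _; first by rewrite divr_ge0.
suff -> : gamma k / m%:R * (delta k / (4 * alpha_min a) *+ m) =
          gamma k * delta k / (4 * alpha_min a) by [].
rewrite -mulr_natr; field.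
by rewrite pnatr_eq0 -lt0n m_gt0 /= ?(lt0r_neq0 alpha_gt0).
Qed.

Lemma Xk_star_sub_lower_level (c : R) xhat : (0 < m)%N -> (forall i, a i != 0) ->
  0 <= gamma k -> 0 < delta k -> gamma k * delta k <= c -> feasible_set a b xhat ->
  Xk_star a b f gamma delta k `<=` [set x | f x <= f xhat + c / (4 * alpha_min a)].
Proof.
move=> m_gt0 a_neq0 gamma_ge0 delta_gt0 gd_le xhat_feas x x_min /=.
apply: le_trans (le_Fk x gamma_ge0 delta_gt0) _; apply: le_trans (x_min xhat) _.
apply: le_trans (Fk_le_feasible m_gt0 a_neq0 gamma_ge0 delta_gt0 xhat_feas) _.
rewrite lerD2l ler_pM2r // invr_gt0 mulr_gt0 //.
exact: alpha_min_gt0.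
Qed.

End PenalizedObjective.

Theorem lemma6 (R : realType) (n m : nat)
  (a : 'I_m -> 'rV[R]_n) (b : 'I_m -> R)
  (f : 'rV[R]_n -> R) (gamma delta : nat -> R) (c : R) :
  (0 < m)%N ->
  (forall i, a i != 0) ->
  feasible_set a b !=set0 ->
  continuous f ->
  bounded_lower_level_sets f ->
  0 < c ->
  (forall k : nat, (1 <= k)%N ->
     0 < gamma k /\ 0 < delta k /\ gamma k * delta k <= c) ->
  (forall k : nat, (1 <= k)%N ->
     Xk_star a b f gamma delta k !=set0 /\ compact (Xk_star a b f gamma delta k)) /\
  (forall xhat, feasible_set a b xhat ->
     forall k : nat, (1 <= k)%N ->
       Xk_star a b f gamma delta k `<=`
         [set x | f x <= f xhat + c / (4 * alpha_min a)]) /\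
  (exists M : R, forall k : nat, (1 <= k)%N ->
     forall x, Xk_star a b f gamma delta k x -> enorm x <= M).
Proof.
move=> m_gt0 a_neq0 [x0 x0_feas] f_cont f_bdd _ params.
have level_bound xhat : feasible_set a b xhat -> forall k, (1 <= k)%N ->
    Xk_star a b f gamma delta k `<=` [set x | f x <= f xhat + c / (4 * alpha_min a)].
  move=> xhat_feas k /params[/ltW gamma_ge0 [delta_gt0 gd_le]].
  exact: Xk_star_sub_lower_level.
split; last split => //.
  move=> k /params[/ltW gamma_ge0 [delta_gt0 _]].
  apply: minimizers_nonempty_compact; first exact: Fk_continuous.
  by apply: bounded_lower_level_setsW f_bdd => x; exact: le_Fk.
have [M HM] := f_bdd (f x0 + c / (4 * alpha_min a)).
by exists M => k k_ge1 x /(level_bound x0 x0_feas k k_ge1); exact: HM.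
Qed.
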